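(* For all integers $N>r\ge 0$, the $N\times N$ discrete Fourier transform matrix $F_N$ satisfies $(r+1)\cdot\big(r+\mathcal{R}_{F_N}(r)/N\big)\ge N$, where rigidity is over $\mathbb{C}$.
   Context: $F_N\in\mathbb{C}^{N\times N}$ has entries $F_N[i,j]=\omega_N^{ij}$ for $i,j\in\{0,\dots,N-1\}$, with $\omega_N=e^{2\pi i/N}$. $\mathcal{R}_A(r)=\min\{\mathrm{nnz}(B):\mathrm{rank}(A+B)\le r\}$ is the rank-$r$ rigidity. *)

From HB Require Import structures.
From mathcomp Require Import all_boot all_order all_algebra.
From mathcomp Require Import boolp reals trigo.
From mathcomp Require Import complex.
Set Implicit Arguments. Unset Strict Implicit. Unset Printing Implicit Defensive.
Import Order.TTheory GRing.Theory Num.Theory.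
Local Open Scope ring_scope.
Local Open Scope complex_scope.

Definition nnz (K : nmodType) (m n : nat) (B : 'M[K]_(m, n)) : nat :=
  #|[set ij : 'I_m * 'I_n | B ij.1 ij.2 != 0]|.

(* rank-r rigidity: R_A(r) = min { nnz B : rank (A + B) <= r }
   (the predicate is made boolean with the classical `[< _ >] of boolp) *)
Definition rigidity_pred (K : fieldType) (m n : nat) (A : 'M[K]_(m, n)) (r : nat) : pred nat :=
  fun k => `[< exists B : 'M[K]_(m, n), (\rank (A + B)%R <= r)%N /\ nnz B = k >].

Lemma rigidity_ex (K : fieldType) (m n : nat) (A : 'M[K]_(m, n)) (r : nat) :
  exists k : nat, rigidity_pred A r k.
Proof.
exists (nnz (- A)); apply/asboolP; exists (- A); split=> //.
by rewrite (_ : (A + - A)%R = 0) ?mxrank0 //; apply/matrixP=> i j; rewrite !mxE subrr.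
Qed.

Definition rigidity (K : fieldType) (m n : nat) (A : 'M[K]_(m, n)) (r : nat) : nat :=
  ex_minn (rigidity_ex A r).

(* omega_N = e^{2 pi i / N} = cos(2 pi / N) + i sin(2 pi / N) in C = R[i] *)
Definition omegaN (R : realType) (N : nat) : R[i] :=
  (cos (2 * pi / N%:R)) +i* (sin (2 * pi / N%:R)).

Definition DFT (R : realType) (N : nat) : 'M[R[i]]_N :=
  \matrix_(i < N, j < N) omegaN R N ^+ (i * j).

(* Let rank (F_N + B) <= r.  Any (r+1) x (r+1) minor of F_N taken on r+1
   CONSECUTIVE rows i0, ..., i0 + r and any r+1 distinct columns j_0, ..., j_r is
   (omega^(j_l))^k * omega^(i0 j_l), i.e. a Vandermonde matrix in the distinct
   nodes omega^(j_l) times an invertible diagonal matrix, hence nonsingular.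
   So on such a block of rows, B must be nonzero in all but at most r columns:
   otherwise r+1 columns untouched by B would give an invertible minor of
   F_N + B.  Cutting the rows into floor(N/(r+1)) disjoint blocks yields
     nnz B >= floor(N/(r+1)) * (N - r),
   and an elementary computation turns this into (r+1)(r + nnz B / N) >= N. *)

From HB Require Import structures.
From mathcomp Require Import all_boot all_order all_algebra.
From mathcomp Require Import boolp reals trigo complex.
From mathcomp Require Import ring lra zify.
Set Implicit Arguments. Unset Strict Implicit. Unset Printing Implicit Defensive.
Import Order.TTheory GRing.Theory Num.Theory.
Local Open Scope ring_scope.
Local Open Scope complex_scope.

Definition row_support (K : nmodType) (m n : nat) (B : 'M[K]_(m, n)) (i : 'I_m) :
  {set 'I_n} := [set j | B i j != 0].

Lemma nnz_row_support (K : nmodType) (m n : nat) (B : 'M[K]_(m, n)) :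
  nnz B = (\sum_i #|row_support B i|)%N.
Proof.
rewrite /nnz -sum1_card big_mkcond /=.
transitivity (\sum_i \sum_j (B i j != 0 : nat)%R)%N.
  by rewrite pair_bigA; apply: eq_bigr => -[i j] _; rewrite inE.
by apply: eq_bigr => i _; rewrite -sum1_card [RHS]big_mkcond; apply: eq_bigr => j _; rewrite inE.
Qed.

Lemma card_bigcup_le (I T : finType) (P : pred I) (A : I -> {set T}) :
  (#|\bigcup_(i | P i) A i| <= \sum_(i | P i) #|A i|)%N.
Proof.
elim/big_rec2: _ => [|i n U _ leUn]; first by rewrite cards0.
by rewrite (leq_trans (leq_card_setU _ _).1) ?leq_add2l.
Qed.

(* When q k <= n, the index t k + j (t < q, j < k) is the j-th row of the
   t-th block of k consecutive rows of an n-row matrix. *)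
Lemma block_ord_subproof (q k n : nat) (hqk : (q * k <= n)%N) (t : 'I_q) (j : 'I_k) :
  (t * k + j < n)%N.
Proof. have := ltn_ord t; have := ltn_ord j; nia. Qed.

Definition block_ord (q k n : nat) (hqk : (q * k <= n)%N) (t : 'I_q) (j : 'I_k) : 'I_n :=
  Ordinal (block_ord_subproof hqk t j).

(* The q disjoint blocks of k consecutive indices cover part of 'I_n, so a
   nonnegative sum over 'I_n dominates the sum over the blocks. *)
Lemma sum_blocks_le (q k n : nat) (hqk : (q * k <= n)%N) (c : 'I_n -> nat) :
  (\sum_(t < q) \sum_(j < k) c (block_ord hqk t j) <= \sum_i c i)%N.
Proof.
have blk_inj : injective (fun p : 'I_q * 'I_k => block_ord hqk p.1 p.2).
  move=> [t1 j1] [t2 j2] /(congr1 val) /= E.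
  have k0 : (0 < k)%N by case: k j1 {hqk E j2} => [[]|].
  have := congr1 (divn^~ k) E; have := congr1 (modn^~ k) E.
  rewrite !modnMDl !divnMDl // !modn_small // !divn_small // !addn0.
  by move=> /val_inj -> /val_inj ->.
rewrite pair_bigA /= -(big_imset c (in2W blk_inj)) /=.
by rewrite big_mkcond leq_sum // => i _; case: ifP.
Qed.

Lemma mxrank_mxsub (F : fieldType) (m n m' n' : nat) (f : 'I_m' -> 'I_m) (g : 'I_n' -> 'I_n)
  (A : 'M[F]_(m, n)) : (\rank (mxsub f g A) <= \rank A)%N.
Proof.
have -> : mxsub f g A = rowsub f 1%:M *m (A *m colsub g 1%:M).
  by rewrite mulmx_colsub mulmx1 -mxsub_mul mul1mx.
exact: leq_trans (mxrankM_maxr _ _) (mxrankM_maxl _ _).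
Qed.

(* Rows f 0, ..., f r of A have all their (r+1)-column minors invertible and
   rank (A + B) <= r: then B is nonzero, on these rows, in all but at most r
   columns, since r+1 columns avoided by B give an invertible minor of A + B. *)
Lemma rank_cover_bound (F : fieldType) (m n r : nat) (A B : 'M[F]_(m, n))
    (f : 'I_r.+1 -> 'I_m) :
  (forall g : 'I_r.+1 -> 'I_n, injective g -> mxsub f g A \in unitmx) ->
  (\rank (A + B)%R <= r)%N ->
  (n - r <= #|\bigcup_k row_support B (f k)|)%N.
Proof.
move=> hA hB; set U := \bigcup_k _.
suff hU : (#|~: U| <= r)%N.
  by rewrite leq_subLR -[X in (X <= _)%N](card_ord n) -(cardsC U) addnC leq_add2r.
rewrite leqNgt; apply/negP => hU.
pose g (l : 'I_r.+1) : 'I_n := enum_val (widen_ord hU l).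
have g_inj : injective g by move=> l1 l2 /enum_val_inj /(congr1 val) /= /val_inj.
have B_g k l : B (f k) (g l) = 0.
  have := enum_valP (widen_ord hU l); rewrite -/(g l) inE => gU.
  by apply/eqP; apply: contraNT gU => Bkl; apply/bigcupP; exists k; rewrite ?inE.
have sub_AB : mxsub f g (A + B) = mxsub f g A.
  by apply/matrixP => k l; rewrite !mxE B_g addr0.
have := mxrank_mxsub f g (A + B); rewrite sub_AB mxrank_unit ?hA //.
by move=> /leq_trans /(_ hB); rewrite ltnn.
Qed.

Lemma nnz_lower_bound (F : fieldType) (m n r : nat) (A B : 'M[F]_(m, n)) :
  (forall (i0 : nat) (f : 'I_r.+1 -> 'I_m) (g : 'I_r.+1 -> 'I_n),
     (forall k, val (f k) = i0 + k)%N -> injective g -> mxsub f g A \in unitmx) ->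
  (\rank (A + B)%R <= r)%N ->
  (m %/ r.+1 * (n - r) <= nnz B)%N.
Proof.
move=> hA hB; have hqm : (m %/ r.+1 * r.+1 <= m)%N by rewrite leq_divM.
rewrite nnz_row_support; apply: leq_trans (sum_blocks_le hqm _).
rewrite -[X in (X * _)%N]card_ord -sum_nat_const leq_sum // => t _.
apply: leq_trans (card_bigcup_le _ _); apply: rank_cover_bound hB => g.
exact: (hA (t * r.+1)%N).
Qed.

(* cos x = 1 has no solution strictly between 0 and 2 pi, since
   cos x = 1 - 2 sin (x/2)^2 and sin > 0 on ]0, pi[. *)
Lemma cos_neq1 (R : realType) (x : R) : 0 < x < pi *+ 2 -> cos x != 1.
Proof.
move=> /andP[x0 x2pi]; have -> : x = (x / 2) *+ 2 by rewrite mulr2n; field.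
rewrite cos_mulr2n cos2sin2; apply/negP => /eqP cos1.
have : 0 < sin (x / 2) by apply: sin_gt0_pi; rewrite mulr2n in x2pi; apply/andP; split; lra.
have : sin (x / 2) ^+ 2 = 0 by move: cos1; lra.
by move/eqP; rewrite sqrf_eq0 => /eqP ->; rewrite ltxx.
Qed.

Section RootOfUnity.
Variables (R : realType) (N : nat).
Local Notation omega := (omegaN R N).
Local Notation theta := (2 * pi / N%:R : R).

Lemma omega_expn (k : nat) :
  omega ^+ k = (cos (k%:R * theta)) +i* (sin (k%:R * theta)).
Proof.
elim: k => [|k IH]; first by rewrite expr0 !mul0r cos0 sin0.
rewrite exprSr IH /omegaN -[k.+1]addn1 (natrD _ k 1) (mulrDl k%:R 1) mul1r cosD sinD.
by apply/eqP; rewrite eq_complex /=; apply/andP; split; apply/eqP; ring.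
Qed.

Lemma omega_neq0 : omega != 0.
Proof.
apply/eqP => /eqP; rewrite eq_complex /= => /andP[/eqP c0 /eqP s0].
by have := cos2Dsin2 theta; rewrite c0 s0 expr0n addr0 => /eqP; rewrite eq_sym oner_eq0.
Qed.

Lemma omega_expn_neq1 (k : nat) : (0 < k < N)%N -> omega ^+ k != 1.
Proof.
move=> /andP[k0 kN]; rewrite omega_expn; apply/eqP => /eqP.
rewrite eq_complex /= => /andP[/eqP cos1 _]; move: cos1; apply/eqP/cos_neq1.
have N0 : (0 : R) < N%:R by rewrite ltr0n (ltn_trans k0 kN).
have -> : k%:R * theta = (k%:R / N%:R) * (pi *+ 2) by rewrite mulr2n; field; rewrite gt_eqF.
have pi2_gt0 : (0 : R) < pi *+ 2 by rewrite mulr2n; have := @pi_gt0 R; lra.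
rewrite mulr_gt0 ?divr_gt0 ?ltr0n ?(ltn_trans k0 kN) //=.
by rewrite gtr_pMl // ltr_pdivrMr // mul1r ltr_nat.
Qed.

Lemma omega_expn_inj (a b : 'I_N) : omega ^+ a = omega ^+ b -> a = b.
Proof.
wlog ab : a b / (a <= b)%N => [wlog_ab|].
  by case: (leqP a b) => [|/ltnW] ? E; [exact: wlog_ab | apply/esym/wlog_ab].
move=> E; apply/val_inj/eqP; rewrite eqn_leq ab leqNgt /=; apply/negP => ltab.
have : omega ^+ (b - a) = 1.
  apply: (mulfI (expf_neq0 a omega_neq0)).
  by rewrite -exprD subnKC // mulr1 E.
apply/eqP/omega_expn_neq1; rewrite subn_gt0 ltab.
exact: leq_ltn_trans (leq_subr _ _) (ltn_ord b).
Qed.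

(* A minor of F_N on r+1 consecutive rows i0, ..., i0 + r and r+1 distinct
   columns is Vandermonde(omega^(g l)) * diag(omega^(i0 g l)), so it is
   invertible. *)
Lemma DFT_minor_unit (r i0 : nat) (f : 'I_r.+1 -> 'I_N) (g : 'I_r.+1 -> 'I_N) :
  (forall k, val (f k) = i0 + k)%N -> injective g -> mxsub f g (DFT R N) \in unitmx.
Proof.
move=> hf g_inj.
pose nodes : 'rV_r.+1 := \row_l omega ^+ g l.
pose scale : 'rV_r.+1 := \row_l omega ^+ (i0 * g l).
have -> : mxsub f g (DFT R N) = Vandermonde r.+1 nodes *m diag_mx scale.
  apply/matrixP => k l; rewrite mul_mx_diag !mxE hf.
  by rewrite mulnDl exprD mulrC mulnC exprM.
rewrite unitmxE det_mulmx det_diag det_Vandermonde unitfE mulf_neq0 //.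
  apply/prodf_neq0 => i _; apply/prodf_neq0 => j ij; rewrite !mxE subr_eq0.
  by apply: contraTneq ij => /omega_expn_inj /g_inj ->; rewrite ltnn.
by apply/prodf_neq0 => i _; rewrite mxE expf_neq0 // omega_neq0.
Qed.

End RootOfUnity.
(* The counting bound implies N^2 <= (r+1)(r N + s): with d = N - r one has
   d <= floor(N/(r+1)) (r+1), so d^2 <= (r+1) s, and 2 r d <= r (r+1) d. *)
Lemma block_count_arith (N r s : nat) :
  (r < N)%N -> (N %/ r.+1 * (N - r) <= s)%N -> (N * N <= r.+1 * (r * N + s))%N.
Proof.
move=> /ltnW /subnK NE; rewrite -{}NE addnK; move: (N - r)%N => d hs.
have hq := divn_eq (d + r) r.+1; have hm := ltn_pmod (d + r) (ltn0Sn r).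
move: (_ %/ _)%N (_ %% _)%N hq hm hs => q m hq hm hs.
have hd : (d <= q * r.+1)%N by lia.
have hdd : (d * d <= r.+1 * s)%N.
  by apply: leq_trans (leq_mul hd (leqnn d)) _; rewrite mulnAC mulnC leq_mul2l hs orbT.
have h2r : (2 * r * d <= r * r.+1 * d)%N by rewrite leq_mul2r; case: r {hq hm hs hd hdd} => //; lia.
nia.
Qed.

Lemma rigidity_witness (F : fieldType) (m n : nat) (A : 'M[F]_(m, n)) (r : nat) :
  exists2 B : 'M[F]_(m, n), (\rank (A + B)%R <= r)%N & nnz B = rigidity A r.
Proof. by rewrite /rigidity; case: ex_minnP => s /asboolP [B [hB <-]] _; exists B. Qed.

Theorem mainTheorem10 (R : realType) (N r : nat) (hrN : (r < N)%N) :
  (N%:R : R) <= (r.+1)%:R * (r%:R + (rigidity (DFT R N) r)%:R / N%:R).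
Proof.
have [B hB <-] := rigidity_witness (DFT R N) r.
have bound : (N * N <= r.+1 * (r * N + nnz B))%N.
  apply: block_count_arith hrN _; apply: nnz_lower_bound hB => i0 f g.
  exact: DFT_minor_unit.
have N0 : (0 : R) < N%:R by rewrite ltr0n (leq_ltn_trans _ hrN).
have -> : (r.+1)%:R * (r%:R + (nnz B)%:R / N%:R)
          = (r.+1 * (r * N + nnz B))%:R / N%:R :> R.
  by rewrite natrM natrD natrM; field; rewrite gt_eqF.
by rewrite ler_pdivlMr // -natrM ler_nat.
Qed.
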